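(* Let $H$ be a graph with vertices $v$ and $w$ such that $\deg(v)=\deg(w)=1$ and $v$ and $w$ have no neighbors in common. Let $G$ be the graph formed from $H$ by adding a new vertex $u$ of degree 2 which is adjacent to $v$ and $w$. If there is an orthogonal vector representation of $\overline{H}$ in $\mathbb{R}^3$ which assigns distinct nonzero vectors to each vertex, then there is such an orthogonal vector representation of $\overline{G}$ in $\mathbb{R}^3$. Hence ${\rm mvr}(\overline{G})\le 3$.
   Context: All graphs are finite and simple; $\overline{G}$ denotes the complement of $G$. An orthogonal vector representation of a graph $G=(V,E)$ in $\mathbb{R}^d$ is a map $\phi:V\to\mathbb{R}^d$ with $\phi(v)\neq 0$ for all $v$, and for distinct $u,v$: $\langle\phi(u),\phi(v)\rangle=0$ if and only if $uv\notin E$. ${\rm mvr}(G)$ is the smallest $d$ for which such a representation exists. *)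

From HB Require Import structures.
From mathcomp Require Import all_boot all_order all_algebra.
From mathcomp Require Import reals.
Set Implicit Arguments. Unset Strict Implicit. Unset Printing Implicit Defensive.
Import Order.TTheory GRing.Theory Num.Theory.
Local Open Scope ring_scope.

Definition simple_graph (T : finType) (e : rel T) : Prop :=
  irreflexive e /\ symmetric e.

Definition compl_graph (T : finType) (e : rel T) : rel T :=
  fun x y => (x != y) && ~~ e x y.

Definition deg (T : finType) (e : rel T) (x : T) : nat := #|[set y | e x y]|.

Definition dotv (R : realType) (d : nat) (a b : 'rV[R]_d) : R :=
  \sum_(i < d) a 0 i * b 0 i.

Definition orth_rep (R : realType) (d : nat) (T : finType) (e : rel T)
  (phi : T -> 'rV[R]_d) : Prop :=
  (forall x, phi x != 0) /\
  (forall x y, x != y -> (dotv (phi x) (phi y) == 0) = ~~ e x y).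

Definition mvr_le (R : realType) (T : finType) (e : rel T) (k : nat) : Prop :=
  exists d : nat, (d <= k)%N /\ exists phi : T -> 'rV[R]_d, orth_rep e phi.

(* G = H plus a new vertex u (= None) adjacent exactly to v and w. *)
Definition add_vertex (T : finType) (e : rel T) (v w : T) : rel (option T) :=
  fun x y => match x, y with
  | Some a, Some b => e a b
  | None, Some b => (b == v) || (b == w)
  | Some a, None => (a == v) || (a == w)
  | None, None => false
  end.

From HB Require Import structures.
From mathcomp Require Import all_boot all_order all_algebra.
From mathcomp Require Import reals ring.
Import GRing.Theory Num.Theory.
Local Open Scope ring_scope.

(* If v and w are
   adjacent, keep phi v, move phi w to p = phi v × z and give u the vector
   phi v × p; otherwise give u the vector z and move phi v, phi w to
   phi a × z and phi b × z, where a and b are the neighbours of v and w.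
   Taking z on the moment curve t ↦ s + (t, t², t³), every required
   non-orthogonality is a nonzero polynomial in t, so all of them hold at a
   common real t.  Distinctness of the new vectors then follows from their
   orthogonality pattern, because v and w have no common neighbour. *)

Section Dotv.
Variables (R : realType) (d : nat).
Implicit Types a b : 'rV[R]_d.

Lemma dotvC a b : dotv a b = dotv b a.
Proof. by apply: eq_bigr => i _; rewrite mulrC. Qed.

Lemma dotvv_eq0 a : (dotv a a == 0) = (a == 0).
Proof.
apply/eqP/eqP => [aa0|->]; last by rewrite /dotv big1 // => i _; rewrite mxE mul0r.
apply/rowP => i; apply/eqP; rewrite mxE -sqrf_eq0 expr2.
by apply/eqP/(psumr_eq0P _ aa0) => // j _; rewrite -expr2 sqr_ge0.
Qed.

End Dotv.

Lemma orth_rep_complP (R : realType) (d : nat) (T : finType) (e : rel T)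
    (phi : T -> 'rV[R]_d) :
  orth_rep (compl_graph e) phi <->
  (forall x, phi x != 0) /\
  (forall x y, x != y -> (dotv (phi x) (phi y) == 0) = e x y).
Proof.
rewrite /orth_rep /compl_graph.
by split=> -[phi0 phiE]; split=> // x y xy; rewrite phiE // xy /= ?negbK.
Qed.

Section AddVertex.
Context {R : realType} {d : nat} {T : finType} {e : rel T} {v w : T}.
Hypotheses (e_irr : irreflexive e) (e_sym : symmetric e).
Hypothesis no_common_nbr : forall x, ~~ (e v x && e w x).

Lemma orth_rep_add_vertex (P : T -> 'rV[R]_d) (z : 'rV[R]_d) :
  injective P -> orth_rep (compl_graph e) P -> z != 0 ->
  (forall y, (dotv z (P y) == 0) = (y == v) || (y == w)) ->
  exists psi : option T -> 'rV[R]_d,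
    injective psi /\ orth_rep (compl_graph (add_vertex e v w)) psi.
Proof.
move=> P_inj /orth_rep_complP[P0 PE] z0 zP.
have zNP x : z != P x.
  apply/eqP=> zPx; have := zP x; rewrite -zPx dotvv_eq0 (negbTE z0).
  case: (eqVneq x v) => [//|xv]; case: (eqVneq x w) => [//|xw] _.
  have evx : e v x by rewrite -(PE v x) 1?(eq_sym v) // -zPx dotvC zP eqxx.
  have ewx : e w x by rewrite -(PE w x) 1?(eq_sym w) // -zPx dotvC zP eqxx orbT.
  by move: (no_common_nbr x); rewrite evx ewx.
exists (fun o => if o is Some x then P x else z); split.
  by move=> [x|] [y|] // => [/P_inj ->|/esym/eqP|/eqP]; rewrite ?(negbTE (zNP _)).
apply/orth_rep_complP; split=> [[x|] //|[x|] [y|] xy //=].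
- by rewrite PE //; apply: contraNneq xy => ->.
- by rewrite dotvC zP.
Qed.

Section Replace.
Variables (phi : T -> 'rV[R]_d) (pv pw z : 'rV[R]_d).
Hypotheses (vw : v != w) (v_nbr : exists a, e v a).
Hypotheses (phi_inj : injective phi) (phi_rep : orth_rep (compl_graph e) phi).
Hypotheses (pv0 : pv != 0) (pw0 : pw != 0) (z0 : z != 0).
Hypothesis pvE : forall x, x != v -> x != w -> (dotv pv (phi x) == 0) = e v x.
Hypothesis pwE : forall x, x != v -> x != w -> (dotv pw (phi x) == 0) = e w x.
Hypothesis pvpwE : (dotv pv pw == 0) = e v w.
Hypothesis z_phi : forall x, x != v -> x != w -> dotv z (phi x) != 0.
Hypotheses (z_pv : dotv z pv = 0) (z_pw : dotv z pw = 0).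

Let P := [eta phi with v |-> pv, w |-> pw].

Let Pv : P v = pv. Proof. by rewrite /= eqxx. Qed.
Let Pw : P w = pw. Proof. by rewrite /= eq_sym (negbTE vw) eqxx. Qed.
Let Pphi x : x != v -> x != w -> P x = phi x.
Proof. by move=> xv xw; rewrite /= (negbTE xv) (negbTE xw). Qed.

Let zP y : (dotv z (P y) == 0) = (y == v) || (y == w).
Proof.
case: (eqVneq y v) => [->|yv]; first by rewrite Pv z_pv eqxx.
case: (eqVneq y w) => [->|yw]; first by rewrite Pw z_pw eqxx.
by rewrite Pphi // (negbTE (z_phi y yv yw)).
Qed.

Let pvP y : y != v -> (dotv pv (P y) == 0) = e v y.
Proof.
move=> yv; case: (eqVneq y w) => [->|yw]; first by rewrite Pw.
by rewrite Pphi // pvE.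
Qed.

Let pwP y : y != w -> (dotv pw (P y) == 0) = e w y.
Proof.
move=> yw; case: (eqVneq y v) => [->|yv]; first by rewrite Pv dotvC pvpwE e_sym.
by rewrite Pphi // pwE.
Qed.

Let replace_inj : injective P.
Proof.
have pv_neq_pw : pv != pw.
  apply/eqP=> pv_pw; have [a eva] := v_nbr; case: (eqVneq a w) => [aw|aw].
    by move: pvpwE; rewrite -aw eva -pv_pw dotvv_eq0 (negbTE pv0).
  have av : a != v by apply: contraTneq eva => ->; rewrite e_irr.
  by have := no_common_nbr a; rewrite eva -(pwP a aw) -pv_pw pvP // eva.
move=> x y Pxy; have := zP x; rewrite Pxy zP; move: Pxy.
have [/orP[]/eqP-> | xvw] := boolP ((x == v) || (x == w));
have [/orP[]/eqP-> | yvw] := boolP ((y == v) || (y == w)) => //.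
- by rewrite Pv Pw => /eqP; rewrite (negbTE pv_neq_pw).
- by rewrite Pv Pw => /esym/eqP; rewrite (negbTE pv_neq_pw).
move: xvw yvw; rewrite !negb_or => /andP[xv xw] /andP[yv yw].
by rewrite !Pphi // => /phi_inj.
Qed.

Let replace_orth_rep : orth_rep (compl_graph e) P.
Proof.
have /orth_rep_complP[phi0 phiE] := phi_rep.
apply/orth_rep_complP; split=> [x|x y].
  case: (eqVneq x v) => [->|xv]; first by rewrite Pv.
  case: (eqVneq x w) => [->|xw]; first by rewrite Pw.
  by rewrite Pphi.
case: (eqVneq x v) => [-> vy|xv]; first by rewrite Pv pvP // eq_sym.
case: (eqVneq x w) => [-> wy|xw]; first by rewrite Pw pwP // eq_sym.
case: (eqVneq y v) => [-> _|yv]; first by rewrite dotvC Pv pvP // e_sym.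
case: (eqVneq y w) => [-> _|yw xy]; first by rewrite dotvC Pw pwP // e_sym.
by rewrite !Pphi // phiE.
Qed.

Lemma orth_rep_add_vertex_replace :
  exists psi : option T -> 'rV[R]_d,
    injective psi /\ orth_rep (compl_graph (add_vertex e v w)) psi.
Proof. exact: orth_rep_add_vertex replace_inj replace_orth_rep z0 zP. Qed.

End Replace.
End AddVertex.

Definition i0 : 'I_3 := ord0.
Definition i1 : 'I_3 := lift ord0 ord0.
Definition i2 : 'I_3 := lift ord0 (lift ord0 ord0).

Lemma ord3P (P : 'I_3 -> Prop) : P i0 -> P i1 -> P i2 -> forall j, P j.
Proof.
move=> P0 P1 P2 [[|[|[|//]]] lt_j3].
- by have -> : Ordinal lt_j3 = i0 by apply: val_inj.
- by have -> : Ordinal lt_j3 = i1 by apply: val_inj.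
- by have -> : Ordinal lt_j3 = i2 by apply: val_inj.
Qed.

Section Vec3.
Context {K : comNzRingType}.
Implicit Types a b c : 'rV[K]_3.

Definition dot3 a b := a 0 i0 * b 0 i0 + a 0 i1 * b 0 i1 + a 0 i2 * b 0 i2.

Definition cross3 a b : 'rV[K]_3 := \row_j
  (if j == i0 then a 0 i1 * b 0 i2 - a 0 i2 * b 0 i1
   else if j == i1 then a 0 i2 * b 0 i0 - a 0 i0 * b 0 i2
   else a 0 i0 * b 0 i1 - a 0 i1 * b 0 i0).

Ltac vec3_ring := rewrite /dot3 ?mxE /=; ring.

Lemma dot30 a : dot3 0 a = 0.
Proof. by vec3_ring. Qed.

Lemma dot3C a b : dot3 a b = dot3 b a.
Proof. by vec3_ring. Qed.

Lemma dot3_crossl a b : dot3 (cross3 a b) a = 0.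
Proof. by vec3_ring. Qed.

Lemma dot3_crossr a b : dot3 (cross3 a b) b = 0.
Proof. by vec3_ring. Qed.

Lemma dot3_cross_cycle a b c : dot3 (cross3 a b) c = dot3 (cross3 c a) b.
Proof. by vec3_ring. Qed.

Lemma dot3_cross_cross a b c d :
  dot3 (cross3 a b) (cross3 c d) = dot3 a c * dot3 b d - dot3 a d * dot3 b c.
Proof. by vec3_ring. Qed.

Lemma dot3_cross_addr a b :
  dot3 (cross3 a (a + b)) (cross3 b (a + b)) = - dot3 (cross3 a b) (cross3 a b).
Proof. by vec3_ring. Qed.

End Vec3.

Lemma rmorph_dot3 (K L : comNzRingType) (f : {rmorphism K -> L}) (a b : 'rV[K]_3) :
  f (dot3 a b) = dot3 (map_mx f a) (map_mx f b).
Proof. by rewrite /dot3 !rmorphD !rmorphM !mxE. Qed.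

Lemma map_cross3 (K L : comNzRingType) (f : {rmorphism K -> L}) (a b : 'rV[K]_3) :
  map_mx f (cross3 a b) = cross3 (map_mx f a) (map_mx f b).
Proof. by apply/rowP; apply: ord3P; rewrite !mxE /= ?rmorphB ?rmorphM ?mxE. Qed.

Lemma dotv3E (R : realType) (a b : 'rV[R]_3) : dotv a b = dot3 a b.
Proof. by rewrite /dotv /dot3 !big_ord_recl big_ord0 addr0 addrA. Qed.

Lemma cross3_neq0 (R : realType) (a b c : 'rV[R]_3) :
  dot3 b c = 0 -> dot3 a c != 0 -> b != 0 -> cross3 a b != 0.
Proof.
move=> bc0 ac0 b0; have bb0 : dot3 b b != 0 by rewrite -dotv3E dotvv_eq0.
apply: contraNneq (mulf_neq0 ac0 bb0) => ab0.
have := dot3_cross_cross a b c b; rewrite ab0 bc0 mulr0 subr0 => <-.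
by rewrite dot30.
Qed.

Lemma exists_nonroot (R : numDomainType) (p : {poly R}) :
  p != 0 -> exists t, p.[t] != 0.
Proof.
move=> p0; pose ts := [seq i%:R : R | i <- iota 0 (size p)].
have ts_uniq : uniq ts.
  by rewrite map_inj_uniq ?iota_uniq //; apply: mulrIn; rewrite oner_eq0.
have /allPn[t _ pt] : ~~ all (root p) ts.
  apply/negP => all_roots; have := max_poly_roots p0 all_roots ts_uniq.
  by rewrite size_map size_iota ltnn.
by exists t.
Qed.

Lemma horner_prod_neq0 {R : idomainType} {I : finType} {P : pred I}
    {F : I -> {poly R}} {t : R} {i : I} :
  (\prod_(j | P j) F j).[t] != 0 -> P i -> (F i).[t] != 0.
Proof. by rewrite horner_prod => /prodf_neq0; apply. Qed.

Section MomentCurve.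
Context {R : comNzRingType}.
Implicit Types (a b c s : 'rV[R]_3) (p q : 'rV[{poly R}]_3).

Definition moment3 s : 'rV[{poly R}]_3 := \row_j ((s 0 j)%:P + 'X^(j.+1)).

Lemma moment3_at0 s : map_mx (horner_eval 0) (moment3 s) = s.
Proof.
by apply/rowP => j; rewrite !mxE /horner_eval hornerD hornerC hornerXn expr0n addr0.
Qed.

Lemma coef_dot3_moment3 c s (j : 'I_3) :
  (dot3 (map_mx polyC c) (moment3 s))`_j.+1 = c 0 j.
Proof.
move: j; apply: ord3P.
all: rewrite /dot3 !mxE !coefD !coefCM !coefD !coefC !coefXn /=; ring.
Qed.

Lemma dot3_moment3_neq0 c s : c != 0 -> dot3 (map_mx polyC c) (moment3 s) != 0.
Proof.
apply: contraNneq => c_s0; apply/eqP/rowP => j.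
by rewrite -(coef_dot3_moment3 c s) c_s0 coef0 mxE.
Qed.

Lemma horner_eval_mx_polyC c t : map_mx (horner_eval t) (map_mx polyC c) = c.
Proof. by apply/rowP => j; rewrite !mxE; apply: hornerC. Qed.

Lemma horner_dot3 p q t :
  (dot3 p q).[t] = dot3 (map_mx (horner_eval t) p) (map_mx (horner_eval t) q).
Proof. by rewrite -horner_evalE rmorph_dot3. Qed.

Lemma horner_dot3C c p t :
  (dot3 (map_mx polyC c) p).[t] = dot3 c (map_mx (horner_eval t) p).
Proof. by rewrite horner_dot3 horner_eval_mx_polyC. Qed.

Lemma horner_dot3_cross3C a b p t :
  (dot3 (cross3 (map_mx polyC a) p) (cross3 (map_mx polyC b) p)).[t] =
  dot3 (cross3 a (map_mx (horner_eval t) p)) (cross3 b (map_mx (horner_eval t) p)).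
Proof. by rewrite horner_dot3 !map_cross3 !horner_eval_mx_polyC. Qed.

End MomentCurve.

Lemma dot3_cross3_moment3_neq0 (R : realType) (a b : 'rV[R]_3) :
  cross3 a b != 0 ->
  dot3 (cross3 (map_mx polyC a) (moment3 (a + b)))
       (cross3 (map_mx polyC b) (moment3 (a + b))) != 0.
Proof.
move=> ab0; apply: contraNneq ab0 => Q0.
have := horner_dot3_cross3C a b (moment3 (a + b)) 0.
rewrite Q0 horner0 moment3_at0 dot3_cross_addr => /esym/eqP.
by rewrite oppr_eq0 -dotv3E dotvv_eq0.
Qed.

Section Extension3.
Context {R : realType} {T : finType} {e : rel T} {v w : T} {phi : T -> 'rV[R]_3}.
Hypotheses (e_irr : irreflexive e) (e_sym : symmetric e) (vw : v != w).
Hypothesis no_common_nbr : forall x, ~~ (e v x && e w x).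
Hypotheses (phi_inj : injective phi) (phi_rep : orth_rep (compl_graph e) phi).

Let phi0 x : phi x != 0.
Proof. by case/orth_rep_complP: phi_rep. Qed.

Let phiE x y : x != y -> (dot3 (phi x) (phi y) == 0) = e x y.
Proof. by move=> xy; case/orth_rep_complP: phi_rep => _ /(_ x y xy); rewrite dotv3E. Qed.

(* Witness phi p: it is orthogonal to phi q, but not to phi x, because q is
   the only neighbour of p. *)
Let cross3_nbr_neq0 {p q x : T} :
  (forall y, e p y = (y == q)) -> x != q -> cross3 (phi x) (phi q) != 0.
Proof.
move=> Ep xq; have epq : e p q by rewrite Ep.
have qp : q != p by apply: contraTneq epq => ->; rewrite e_irr.
apply: (@cross3_neq0 _ _ _ (phi p)) (phi0 q).
  by apply/eqP; rewrite phiE // e_sym Ep eqxx.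
case: (eqVneq x p) => [->|xp]; first by rewrite -dotv3E dotvv_eq0.
by rewrite phiE // e_sym Ep (negbTE xq).
Qed.

Lemma orth_rep_add_vertex_adjacent :
  (forall y, e v y = (y == w)) -> (forall y, e w y = (y == v)) ->
  exists psi : option T -> 'rV[R]_3,
    injective psi /\ orth_rep (compl_graph (add_vertex e v w)) psi.
Proof.
move=> Ev Ew; set V := phi v.
pose c1 x := cross3 (phi x) V; pose c2 x := cross3 (c1 x) V.
have c1_neq0 x : x != v -> c1 x != 0 by exact: cross3_nbr_neq0 Ew.
have c2_neq0 x : x != v -> c2 x != 0.
  move=> xv; apply: (@cross3_neq0 _ _ _ (c1 x)) (phi0 v).
    by rewrite dot3C dot3_crossr.
  by rewrite -dotv3E dotvv_eq0 c1_neq0.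
pose lin (c : 'rV[R]_3) := dot3 (map_mx polyC c) (moment3 0).
have [t] : exists t, (\prod_(x | x != v) (lin (c1 x) * lin (c2 x))).[t] != 0.
  apply/exists_nonroot/prodf_neq0 => x xv.
  by rewrite mulf_neq0 ?dot3_moment3_neq0 ?c1_neq0 ?c2_neq0.
set z := map_mx (horner_eval t) (moment3 0) => Pt.
set pw := cross3 V z; set u := cross3 V pw.
have phi_generic x : x != v -> dot3 pw (phi x) != 0 /\ dot3 u (phi x) != 0.
  move=> xv; have := horner_prod_neq0 Pt xv.
  rewrite hornerM mulf_eq0 negb_or !horner_dot3C -/z => /andP[c1z c2z].
  by split; rewrite dot3_cross_cycle // dot3C dot3_cross_cycle.
have wv : w != v by rewrite eq_sym.
apply: (orth_rep_add_vertex_replace e_irr e_sym no_common_nbr phi V pw u vw _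
          phi_inj phi_rep).
- by exists w; rewrite Ev.
- exact: phi0.
- by apply: contraNneq (phi_generic w wv).1 => ->; rewrite dot30.
- by apply: contraNneq (phi_generic w wv).2 => ->; rewrite dot30.
- by move=> x xv _; rewrite dotv3E phiE // eq_sym.
- by move=> x xv _; rewrite dotv3E Ew (negbTE xv) (negbTE (phi_generic x xv).1).
- by rewrite Ev eqxx dotv3E dot3C dot3_crossl eqxx.
- by move=> x xv _; rewrite dotv3E (phi_generic x xv).2.
- by rewrite dotv3E dot3_crossl.
- by rewrite dotv3E dot3_crossr.
Qed.

Lemma orth_rep_add_vertex_nonadjacent (a b : T) :
  a != w -> b != v -> a != b ->
  (forall y, e v y = (y == a)) -> (forall y, e w y = (y == b)) ->
  exists psi : option T -> 'rV[R]_3,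
    injective psi /\ orth_rep (compl_graph (add_vertex e v w)) psi.
Proof.
move=> aw bv ab Ev Ew; set A := phi a; set B := phi b.
have ba : b != a by rewrite eq_sym.
set zs := moment3 (A + B).
pose lin (c : 'rV[R]_3) := dot3 (map_mx polyC c) zs.
pose Q := dot3 (cross3 (map_mx polyC A) zs) (cross3 (map_mx polyC B) zs).
have [t] : exists t, (Q * \prod_x lin (phi x)
    * \prod_(x | x != a) lin (cross3 (phi x) A)
    * \prod_(x | x != b) lin (cross3 (phi x) B)).[t] != 0.
  apply: exists_nonroot; rewrite !mulf_neq0 //.
  - exact/dot3_cross3_moment3_neq0/(cross3_nbr_neq0 Ew ab).
  - by apply/prodf_neq0 => x _; exact/dot3_moment3_neq0/phi0.
  - by apply/prodf_neq0 => x xa; exact/dot3_moment3_neq0/(cross3_nbr_neq0 Ev xa).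
  - by apply/prodf_neq0 => x xb; exact/dot3_moment3_neq0/(cross3_nbr_neq0 Ew xb).
rewrite !hornerM !mulf_eq0 !negb_or => /andP[/andP[/andP[Qt P1] P2] P3].
set z := map_mx (horner_eval t) zs; set pv := cross3 A z; set pw := cross3 B z.
have pv_pw : dot3 pv pw != 0 by rewrite -horner_dot3_cross3C.
have z_phi x : dot3 z (phi x) != 0.
  by rewrite dot3C -horner_dot3C (horner_prod_neq0 P1).
have pv_phi x : x != a -> dot3 pv (phi x) != 0.
  by move=> xa; rewrite dot3_cross_cycle -horner_dot3C (horner_prod_neq0 P2).
have pw_phi x : x != b -> dot3 pw (phi x) != 0.
  by move=> xb; rewrite dot3_cross_cycle -horner_dot3C (horner_prod_neq0 P3).
apply: (orth_rep_add_vertex_replace e_irr e_sym no_common_nbr phi pv pw z vw _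
          phi_inj phi_rep).
- by exists a; rewrite Ev.
- by apply: contraNneq (pv_phi b ba) => ->; rewrite dot30.
- by apply: contraNneq (pw_phi a ab) => ->; rewrite dot30.
- by apply: contraNneq (z_phi a) => ->; rewrite dot30.
- move=> x _ _; rewrite dotv3E Ev; case: (eqVneq x a) => [->|xa].
    by rewrite dot3_crossl eqxx.
  exact/negbTE/pv_phi.
- move=> x _ _; rewrite dotv3E Ew; case: (eqVneq x b) => [->|xb].
    by rewrite dot3_crossl eqxx.
  exact/negbTE/pw_phi.
- by rewrite dotv3E Ev (negbTE pv_pw) eq_sym (negbTE aw).
- by move=> x _ _; rewrite dotv3E z_phi.
- by rewrite dotv3E dot3C dot3_crossr.
- by rewrite dotv3E dot3C dot3_crossr.
Qed.

End Extension3.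

Lemma deg1_nbr (T : finType) (e : rel T) x :
  deg e x = 1%N -> exists a, forall y, e x y = (y == a).
Proof.
by move/eqP/cards1P=> [a /setP xa]; exists a => y; have := xa y; rewrite !inE.
Qed.

Theorem lemma4p5 (R : realType) (T : finType) (e : rel T) (v w : T) :
  simple_graph e -> v != w ->
  deg e v = 1%N -> deg e w = 1%N ->
  (forall x, ~~ (e v x && e w x)) ->
  (exists phi : T -> 'rV[R]_3, injective phi /\ orth_rep (compl_graph e) phi) ->
  (exists psi : option T -> 'rV[R]_3,
      injective psi /\ orth_rep (compl_graph (add_vertex e v w)) psi) /\
  mvr_le R (compl_graph (add_vertex e v w)) 3.
Proof.
move=> [e_irr e_sym] vw /deg1_nbr[a Ev] /deg1_nbr[b Ew] no_common [phi [phi_inj phi_rep]].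
suff [psi [psi_inj psi_rep]] : exists psi : option T -> 'rV[R]_3,
    injective psi /\ orth_rep (compl_graph (add_vertex e v w)) psi.
  by split; [exists psi | exists 3%N; split=> //; exists psi].
case: (eqVneq a w) => [aw|aw].
  have bv : b = v by apply/eqP; rewrite eq_sym -Ew e_sym Ev aw.
  apply: (orth_rep_add_vertex_adjacent e_irr e_sym vw no_common phi_inj phi_rep).
    by move=> y; rewrite Ev aw.
  by move=> y; rewrite Ew bv.
have bv : b != v by apply: contraNneq aw => bv; rewrite eq_sym -Ev e_sym Ew bv.
have ab : a != b by apply: contraNneq (no_common a) => ab; rewrite Ev Ew ab !eqxx.
exact: (orth_rep_add_vertex_nonadjacent e_irr e_sym vw no_common phi_inj phi_rep
          a b aw bv ab Ev Ew).
Qed.
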